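(* Let $p\in]1,+\infty[$ and set $q=2$ if $p\in]1,2]$, $q=2(p-1)$ if $p\ge2$. Consider the implicit scheme $\frac{\mathbf u^k-\mathbf u^{k-1}}{\tau_{k-1}}=-\Delta_p^{\mathbf K}\mathbf u^k+\mathbf f^k$, $k\in[N]$, $\mathbf u^0=\mathbf g$, with step sizes $\tau_{k-1}>0$. Assume $I_n\mathbf K$ is nonnegative, measurable, symmetric with $\sup_x\int I_n\mathbf K(x,y)dy<\infty$; $I_n\mathbf g\in L^{\max(p,q)}(\Omega)$ with $\sup_n\|I_n\mathbf g\|_{L^q(\Omega)}<\infty$; $\bar f_n\in L^1([0,T];L^{\max(p,q)}(\Omega))$ with $\sup_n\|\bar f_n\|_{L^1([0,T];L^q(\Omega))}<\infty$. Assume in addition $\sup_n\|I_n\mathbf K\|_{L^{\infty,1}(\Omega^2)}<+\infty$ and $\sup_n\|\bar f_n\|_{\mathrm{BV}([0,T];L^2(\Omega))}<+\infty$. Then $\sup_{t\in[0,T],n\in\mathbb N}\|\tilde u_n(\cdot,t)-\bar u_n(\cdot,t)\|_{L^2(\Omega)}\le C\tau$, where $C>0$ does not depend on $(n,N,T)$.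
   Context: $d\ge1$, $\Omega=[0,1]^d$, hypercubic cells $\Omega^n_{\mathbf i}$ of measures $h_{\mathbf i}$, $I_n$ the piecewise-constant injector. $\Psi(s)=|s|^{p-2}s$; $(\Delta_p^{\mathbf K}\mathbf u)_{\mathbf i}=-\sum_{\mathbf j}h_{\mathbf j}\mathbf K_{\mathbf i\mathbf j}\Psi(\mathbf u_{\mathbf j}-\mathbf u_{\mathbf i})$. Time partition $0=t_0<\dots<t_N=T$, $\tau_{k-1}=t_k-t_{k-1}$, $\tau=\max\tau_{k-1}$. With $u_n^k=I_n\mathbf u^k$, $f_n^k=I_n\mathbf f^k$: for $t\in]t_{k-1},t_k]$, $\tilde u_n(x,t)=\frac{t_k-t}{\tau_{k-1}}u_n^{k-1}(x)+\frac{t-t_{k-1}}{\tau_{k-1}}u_n^k(x)$, $\bar u_n(x,t)=u_n^k(x)$, $\bar f_n(x,t)=f_n^k(x)$. $\|F\|_{L^{\infty,1}(\Omega^2)}=\sup_x\int|F(x,y)|dy$. For $h:\Omega\times[0,T]\to\mathbb R$, $\mathrm{Var}_2(h)=\sup_{0\le s_0<\dots<s_M\le T}\sum_i\|h(\cdot,s_i)-h(\cdot,s_{i-1})\|_{L^2(\Omega)}$ and $\|h\|_{\mathrm{BV}([0,T];L^2(\Omega))}=\|h(\cdot,0)\|_{L^2(\Omega)}+\mathrm{Var}_2(h)$. *)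

From HB Require Import structures.
From mathcomp Require Import all_boot all_order all_algebra.
From mathcomp Require Import all_classical all_reals all_analysis.
Set Implicit Arguments. Unset Strict Implicit. Unset Printing Implicit Defensive.
Import Order.TTheory GRing.Theory Num.Theory.
Local Open Scope ring_scope.

Section Defs.
Variable R : realType.

Definition Psi (p s : R) : R := `|s| `^ (p - 2) * s.

Definition qexp (p : R) : R := if p <= 2 then 2 else 2 * (p - 1).

Variable I : finType.   (* index set of the cells Omega^n_i *)
Variable h : I -> R.    (* h i = measure of the cell Omega^n_i *)

(* || I_n v ||_{L^r(Omega)} for a grid function v (piecewise constant) *)
Definition Lnorm_n (r : R) (v : I -> R) : R :=
  (\sum_i h i * `|v i| `^ r) `^ r^-1.

(* || I_n K ||_{L^{oo,1}(Omega^2)} = sup_x int |I_n K(x,y)| dy *)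
Definition Linf1_n (K : I -> I -> R) : R :=
  \big[Num.max/0]_i \sum_j h j * `|K i j|.

Definition plap (p : R) (K : I -> I -> R) (u : I -> R) (i : I) : R :=
  - \sum_j h j * K i j * Psi p (u j - u i).

(* index k such that s in ]t_{k-1}, t_k]  (k = 1 for s = t_0 = 0) *)
Definition kidx (t : nat -> R) (N : nat) (s : R) : nat :=
  (1 + \sum_(1 <= j < N) nat_of_bool (t j < s)%R)%N.

Definition taumax (t : nat -> R) (N : nat) : R :=
  \big[Num.max/0]_(k < N) (t k.+1 - t k).

(* bar u_n(., s) = u^k,  bar f_n(., s) = f^k  for s in ]t_{k-1},t_k] *)
Definition tbar (u : nat -> I -> R) (t : nat -> R) (N : nat) (s : R) : I -> R :=
  u (kidx t N s).

Definition ttilde (u : nat -> I -> R) (t : nat -> R) (N : nat) (s : R) : I -> R :=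
  fun i => let k := kidx t N s in
    (t k - s) / (t k - t k.-1) * u k.-1 i + (s - t k.-1) / (t k - t k.-1) * u k i.

Definition Var2 (T : R) (F : R -> I -> R) : \bar R :=
  ereal_sup [set x : \bar R | exists (M : nat) (s : nat -> R),
     [/\ 0 <= s 0%N, (forall i, (i < M)%N -> s i < s i.+1), s M <= T &
         x = (\sum_(1 <= i < M.+1) Lnorm_n 2 (fun j => F (s i) j - F (s i.-1) j))%:E]].

Definition BVnorm (T : R) (F : R -> I -> R) : \bar R :=
  ((Lnorm_n 2 (F 0))%:E + Var2 T F)%E.

End Defs.

From HB Require Import structures.
From mathcomp Require Import all_boot all_order all_algebra.
From mathcomp Require Import all_classical all_reals all_analysis.
From mathcomp Require Import measurable_realfun.
From mathcomp Require Import ring lra.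

(* Testing the scheme against Psi_q(u^k) and using the accretivity
   <Psi_q(u), Delta_p^K u> >= 0 (symmetrise the double sum: Psi_q is
   nondecreasing and K is symmetric), Hoelder's inequality gives the L^q
   stability ||u^k||_q <= ||u^{k-1}||_q + tau_{k-1} ||f^k||_q, so that
   ||u^k||_q <= ||g||_q + ||bar f_n||_{L^1(L^q)} uniformly.  The choice of q
   makes |s|^{2(p-1)} <= 1 + |s|^q, so Cauchy-Schwarz against the kernel turns
   this into a uniform bound on ||Delta_p^K u^k||_2, while the BV bound
   controls ||f^k||_2.  On ]t_{k-1}, t_k] the scheme gives
   tilde u_n - bar u_n = (t_k - t) (Delta_p^K u^k - f^k), whose L^2 norm is
   therefore O(tau). *)

Set Implicit Arguments.
Unset Strict Implicit.
Unset Printing Implicit Defensive.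
Import Order.TTheory GRing.Theory Num.Theory.
Local Open Scope ring_scope.

Section TimeGrid.
Variables (R : realType) (t : nat -> R) (N : nat).
Hypothesis t_incr : forall k, (k < N)%N -> t k < t k.+1.

Lemma grid_lt i j : (i < j)%N -> (j <= N)%N -> t i < t j.
Proof.
move=> ij jN.
apply: (Order.NatMonotonyTheory.homo_ltn_lt_in (D := leq^~ N)) => //.
- by move=> a b _ bN k /andP[_ /ltnW kb]; exact: leq_trans kb bN.
- by move=> k _; exact: t_incr.
- exact: leq_trans (ltnW ij) jN.
Qed.

Lemma grid_le i j : (i <= j)%N -> (j <= N)%N -> t i <= t j.
Proof. by rewrite leq_eqVlt => /orP[/eqP -> //|ij] jN; exact/ltW/grid_lt. Qed.

Definition cell (k : nat) : set R :=
  [set` Interval (if k == 1%N then BLeft (t 0%N) else BRight (t k.-1))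
                 (BRight (t k))].

Lemma cellP k s :
  cell k s <-> t k.-1 <= s <= t k /\ (k = 1%N \/ t k.-1 < s).
Proof.
rewrite /cell /=; case: eqP => [->|k1] /=; rewrite in_itv /=.
  by split => [-> |[-> _]]; [split => //; left|].
split => [/andP[a ->]|[/andP[_ ->] [//|->//]]].
by rewrite (ltW a); split => //; right.
Qed.

Lemma cell_right k : (1 <= k <= N)%N -> cell k (t k).
Proof.
move=> /andP[k1 kN]; have k1k : (k.-1 < k)%N by rewrite prednK.
apply/cellP; rewrite lexx andbT (ltW (grid_lt k1k kN)).
by split => //; right; exact: grid_lt.
Qed.

Lemma cell_t0 : (0 < N)%N -> cell 1 (t 0%N).
Proof. by move=> N0; apply/cellP; rewrite lexx (ltW (t_incr N0)); split; [|left]. Qed.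

Lemma kidx_cell k s : (1 <= k <= N)%N -> cell k s -> kidx t N s = k.
Proof.
move=> /andP[k1 kN] /cellP[/andP[s1 s2] hk]; rewrite /kidx.
rewrite (eq_big_nat _ _ (F2 := fun j => nat_of_bool (j < k)%N)); last first.
  move=> j /andP[j1 jN]; congr nat_of_bool; case: (ltnP j k) => jk.
    case: hk => [k1'|hs]; first by move: jk; rewrite k1' ltnS leqNgt j1.
    have jk1 : (j <= k.-1)%N by rewrite -ltnS prednK.
    exact: le_lt_trans (grid_le jk1 (leq_trans (leq_pred k) kN)) hs.
  by apply/negbTE; rewrite -leNgt; apply: le_trans s2 (grid_le jk (ltnW jN)).
rewrite (big_cat_nat _ (n := k)) //= [X in (_ + (_ + X))%N]big_nat_cond.
rewrite [X in (_ + (_ + X))%N]big1; last first.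
  by move=> j /andP[/andP[kj _] _]; rewrite ltnNge kj.
rewrite addn0 (eq_big_nat _ _ (F2 := fun _ => 1%N)); last by move=> j /andP[_ ->].
by rewrite big_const_nat iter_addn_0 mul1n subnKC.
Qed.

Lemma kidx_t k : (1 <= k <= N)%N -> kidx t N (t k) = k.
Proof. by move=> kN; apply: (kidx_cell kN); exact: (cell_right kN). Qed.

Lemma cell_kidx s : (0 < N)%N -> t 0%N <= s <= t N ->
  (1 <= kidx t N s <= N)%N /\ cell (kidx t N s) s.
Proof.
move=> N0 /andP[s0 sN].
suff [k kN sk] : exists2 k, (1 <= k <= N)%N & cell k s by rewrite (kidx_cell kN sk).
have ex : exists k, (s <= t k) && (k <= N)%N by exists N; rewrite sN leqnn.
case: (ex_minnP ex) => -[|k] /andP[sk kN] kmin.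
  have -> : s = t 0%N by apply/le_anti; rewrite sk s0.
  by exists 1%N; [rewrite N0 | exact: cell_t0].
exists k.+1; first by rewrite kN.
have tks : t k < s.
  rewrite ltNge; apply/negP => skk.
  by have := kmin k; rewrite skk (ltnW kN) ltnn => /(_ isT).
by apply/cellP; rewrite /= sk (ltW tks); split; [|right].
Qed.

Lemma step_le_taumax k : (1 <= k <= N)%N -> t k - t k.-1 <= taumax t N.
Proof.
case: k => // k /= kN.
by have := le_bigmax 0 (fun j : 'I_N => t j.+1 - t j) (Ordinal kN).
Qed.

Lemma ttilde_sub_tbarE (I : finType) (u : nat -> I -> R) s i k :
  kidx t N s = k -> t k.-1 != t k ->
  ttilde u t N s i - tbar u t N s i =
  (s - t k) * ((u k i - u k.-1 i) / (t k - t k.-1)).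
Proof. by move=> kE tk; rewrite /ttilde /tbar kE; field; rewrite subr_eq0 eq_sym. Qed.

Section StepIntegral.
Local Open Scope classical_set_scope.
Hypothesis N_gt0 : (0 < N)%N.

Lemma kidx_indicE (b : nat -> R) s : t 0%N <= s <= t N ->
  b (kidx t N s) = \sum_(k < N) b k.+1 * \1_(cell k.+1) s.
Proof.
move=> sT; have [/andP[k1 kN] sk] := cell_kidx N_gt0 sT.
move: k1 kN sk; case: (kidx t N s) => // k _ kN sk.
rewrite (bigD1 (Ordinal kN)) //= indicE mem_set // mulr1 big1 ?addr0 // => i.
rewrite indicE; case: (boolP (s \in _)) => [/set_mem si|_]; last by rewrite mulr0.
have := kidx_cell (k := i.+1) (ltn_ord i) si.
rewrite (kidx_cell (k := k.+1) kN sk) => -[ik].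
by rewrite (_ : i = Ordinal kN) ?eqxx //; exact: val_inj.
Qed.

Lemma cell_sub_grid k : (k < N)%N -> cell k.+1 `<=` `[t 0%N, t N].
Proof.
move=> kN s /cellP[/andP[s1 s2] _]; rewrite /= in_itv /=.
rewrite (le_trans (grid_le (leq0n k) (ltnW kN)) s1).
by rewrite (le_trans s2 (grid_le kN (leqnn N))).
Qed.

Lemma lebesgue_measure_cell k : (k < N)%N ->
  @lebesgue_measure R (cell k.+1) = (t k.+1 - t k)%:E.
Proof.
move=> kN; rewrite lebesgue_measure_itv /=.
by case: eqP => [[->]|_]; rewrite /= lte_fin t_incr // EFinB.
Qed.

Lemma integral_kidx (b : nat -> R) : (forall k, 0 <= b k) ->
  (\int[@lebesgue_measure R]_(s in `[t 0%N, t N]) (b (kidx t N s))%:E =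
   (\sum_(k < N) b k.+1 * (t k.+1 - t k))%:E)%E.
Proof.
move=> b0; have mcell k : measurable (cell k) by exact: measurable_itv.
transitivity (\int[@lebesgue_measure R]_(s in `[t 0%N, t N])
    \sum_(k < N) (b k.+1 * \1_(cell k.+1) s)%:E)%E.
  by apply: eq_integral => s; rewrite inE => sT; rewrite sumEFin kidx_indicE.
rewrite ge0_integral_sum //; last 2 first.
- move=> k; apply/measurable_EFinP; apply: measurable_funM.
    exact: measurable_cst.
  exact: measurable_indic (mcell _).
- by move=> k s _; rewrite lee_fin mulr_ge0 // indicE.
rewrite -sumEFin; apply: eq_bigr => k _.
transitivity (\int[@lebesgue_measure R]_(x in `[t 0%N, t N])
    ((b k.+1)%:E * (\1_(cell k.+1) x)%:E))%E.
  by apply: eq_integral => x _; rewrite EFinM.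
rewrite ge0_integralZl_EFin //; last first.
  by apply/measurable_EFinP; exact: measurable_indic (mcell _).
rewrite integral_indic //; last exact: measurable_itv.
rewrite EFinM setIidl; last exact: cell_sub_grid.
by congr (_ * _)%E; exact: lebesgue_measure_cell.
Qed.

End StepIntegral.

End TimeGrid.

Section Psi.
Variable R : realType.
Implicit Types (p q x a b : R).

Lemma powRB2_mul x r : 0 <= x -> 1 < r -> x `^ (r - 2) * x = x `^ (r - 1).
Proof.
move=> x0 r1; rewrite mulrC (_ : r - 2 = (r - 1) - 1); last by ring.
by rewrite mulr_powRB1 // subr_gt0.
Qed.

Lemma normr_Psi p x : 1 < p -> `|Psi p x| = `|x| `^ (p - 1).
Proof. by move=> p1; rewrite /Psi normrM ger0_norm ?powR_ge0 // powRB2_mul. Qed.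

Lemma Psi_mul_id q x : 1 < q -> Psi q x * x = `|x| `^ q.
Proof.
move=> q1; rewrite /Psi -mulrA -expr2 -real_normK ?num_real // expr2 mulrA.
by rewrite powRB2_mul // mulrC mulr_powRB1 //; lra.
Qed.

Lemma PsiN p x : Psi p (- x) = - Psi p x.
Proof. by rewrite /Psi normrN mulrN. Qed.

Lemma Psi_ge0 p x : 0 <= x -> 0 <= Psi p x.
Proof. by move=> x0; rewrite mulr_ge0 ?powR_ge0. Qed.

Lemma Psi_homo q : 1 < q -> {homo Psi q : a b / a <= b}.
Proof.
move=> q1; have pos a b : 0 <= a -> a <= b -> Psi q a <= Psi q b.
  move=> a0 ab; have b0 := le_trans a0 ab.
  rewrite /Psi !ger0_norm // !powRB2_mul //.
  by apply: ge0_ler_powR; rewrite ?nnegrE //; lra.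
move=> a b ab; have [a0|a0] := leP 0 a; first exact: pos.
rewrite -(opprK a) PsiN; have [b0|b0] := leP 0 b.
  by rewrite (@le_trans _ _ 0) ?oppr_le0 ?Psi_ge0 // oppr_ge0 ltW.
by rewrite -(opprK b) (PsiN _ (- b)) lerN2 pos ?lerN2 // oppr_ge0 ltW.
Qed.

Lemma Psi_cross p q a b : 1 < p -> 1 < q ->
  (Psi q a - Psi q b) * Psi p (b - a) <= 0.
Proof.
move=> p1 q1; rewrite {2}/Psi mulrCA; apply: mulr_ge0_le0; first exact: powR_ge0.
have [ab|ab] := leP a b.
  by apply: mulr_le0_ge0; rewrite ?subr_le0 ?subr_ge0 ?Psi_homo.
by apply: mulr_ge0_le0; rewrite ?subr_ge0 ?subr_le0 ?Psi_homo // ltW.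
Qed.

End Psi.

Lemma qexp_gt1 (R : realType) (p : R) : 1 < p -> 1 < qexp p.
Proof. by rewrite /qexp; case: ifP => [_|/negbT]; rewrite ?ltr1n // -ltNge; lra. Qed.

Lemma sqr_powRB1_le_qexp (R : realType) (p y : R) : 1 < p -> 0 <= y ->
  (y `^ (p - 1)) ^+ 2 <= 1 + y `^ qexp p.
Proof.
move=> p1 y0; rewrite expr2 -powRD; last by apply/implyP => /eqP; lra.
have q_ge : p - 1 + (p - 1) <= qexp p by rewrite /qexp; case: ifP => [p2|_]; lra.
have := powR_ge0 y (qexp p); have := powR_ge0 y (p - 1 + (p - 1)).
have [y1|y1] := leP y 1; last by have := ler_powR (ltW y1) q_ge; lra.
suff : y `^ (p - 1 + (p - 1)) <= 1 by lra.
have [->|y_neq0] := eqVneq y 0; first by rewrite powR0 //; apply/eqP; lra.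
rewrite -[X in _ <= X](powRr0 y); apply: ger_powR; last lra.
by rewrite y1 lt_def y_neq0 y0.
Qed.

Lemma powR_normB_le (R : realType) (q a b : R) : 0 <= q ->
  `|a - b| `^ q <= 2 `^ q * (`|a| `^ q + `|b| `^ q).
Proof.
move=> q0; pose m := Num.max `|a| `|b|.
have m0 : 0 <= m by rewrite le_max normr_ge0.
have abm : `|a - b| <= 2 * m.
  apply: le_trans (ler_normB _ _) _.
  by rewrite mulr2n mulrDl mul1r lerD // le_max lexx ?orbT.
apply: le_trans (ge0_ler_powR q0 _ _ abm) _; rewrite ?nnegrE ?mulr_ge0 //.
rewrite powRM //; apply: ler_wpM2l; first exact: powR_ge0.
have := powR_ge0 `|a| q; have := powR_ge0 `|b| q.
by rewrite /m; case: (leP `|a| `|b|) => _; lra.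
Qed.

Lemma powRVK (R : realType) (S P : R) : 0 <= S -> 0 < P -> (S `^ P^-1) `^ P = S.
Proof. by move=> S0 P0; rewrite -powRrM mulVf ?gt_eqF // powRr1. Qed.

Lemma powR_div (R : realType) (a A P : R) : 0 <= a -> 0 < A ->
  (a / A) `^ P = a `^ P / A `^ P.
Proof.
move=> a0 A0.
have -> : a `^ P = (A * (a / A)) `^ P by rewrite mulrCA mulfV ?gt_eqF ?mulr1.
rewrite [(A * _) `^ _]powRM ?divr_ge0 ?(ltW A0) //.
by rewrite mulrAC mulfV ?mul1r // gt_eqF // powR_gt0.
Qed.

Lemma cauchy_schwarz_weighted (R : realType) (J : finType) (w a : J -> R) :
  (forall j, 0 <= w j) ->
  (\sum_j w j * a j) ^+ 2 <= (\sum_j w j) * (\sum_j w j * a j ^+ 2).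
Proof.
move=> w0; set W := \sum_j w j; set Q := \sum_j w j * a j ^+ 2.
set S := \sum_j w j * a j.
have : 0 <= \sum_j \sum_l w j * w l * (a j - a l) ^+ 2.
  apply: sumr_ge0 => j _; apply: sumr_ge0 => l _.
  by rewrite mulr_ge0 ?sqr_ge0 ?mulr_ge0.
have -> : \sum_j \sum_l w j * w l * (a j - a l) ^+ 2 = Q * W + W * Q - 2 * (S * S).
  rewrite /W /Q /S !big_distrlr mulr_sumr -!big_split -sumrB; apply: eq_bigr => j _.
  by rewrite mulr_sumr -!big_split -sumrB; apply: eq_bigr => l _ /=; ring.
by rewrite expr2; nra.
Qed.

Section WeightedNorms.
Variables (R : realType) (I : finType) (h : I -> R).
Hypothesis h_ge0 : forall i, 0 <= h i.

Lemma Lnorm_n_ge0 r v : 0 <= Lnorm_n h r v.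
Proof. exact: powR_ge0. Qed.

Lemma Lnorm_n_powR r v : 0 < r -> Lnorm_n h r v `^ r = \sum_i h i * `|v i| `^ r.
Proof.
by move=> r0; rewrite powRVK // sumr_ge0 // => i _; rewrite mulr_ge0 ?powR_ge0.
Qed.

Lemma Lnorm_n2E v : Lnorm_n h 2 v = Num.sqrt (\sum_i h i * v i ^+ 2).
Proof.
rewrite /Lnorm_n (eq_bigr (fun i => h i * v i ^+ 2)); last first.
  by move=> i _; rewrite (powR_mulrn 2 (normr_ge0 (v i))) real_normK ?num_real.
by rewrite powR12_sqrt // sumr_ge0 // => i _; rewrite mulr_ge0 ?sqr_ge0.
Qed.

Lemma Lnorm_n2_sqr v : Lnorm_n h 2 v ^+ 2 = \sum_i h i * v i ^+ 2.
Proof.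
by rewrite Lnorm_n2E sqr_sqrtr // sumr_ge0 // => i _; rewrite mulr_ge0 ?sqr_ge0.
Qed.

Lemma sum_sqrD_le a b :
  \sum_i h i * (a i + b i) ^+ 2 <=
  2 * (\sum_i h i * a i ^+ 2 + \sum_i h i * b i ^+ 2).
Proof.
rewrite mulrDr !mulr_sumr -big_split /=; apply: ler_sum => i _.
rewrite -subr_ge0 (_ : _ - _ = h i * (a i - b i) ^+ 2); last by ring.
by rewrite mulr_ge0 ?sqr_ge0.
Qed.

Lemma hoelder_Lnorm_n P Q a b : 0 < P -> 0 < Q -> P^-1 + Q^-1 = 1 ->
  \sum_i h i * `|a i| * `|b i| <= Lnorm_n h P a * Lnorm_n h Q b.
Proof.
move=> P0 Q0 PQ; rewrite /Lnorm_n.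
set Sa := \sum_i h i * `|a i| `^ P; set Sb := \sum_i h i * `|b i| `^ Q.
have vanish (c d : I -> R) (r : R) : \sum_i h i * `|c i| `^ r = 0 ->
    \sum_i h i * `|c i| * `|d i| = 0.
  move=> S0; apply: big1 => i _.
  have /eqP : h i * `|c i| `^ r = 0.
    exact: psumr_eq0P (fun j _ => mulr_ge0 (h_ge0 j) (powR_ge0 _ _)) S0 i isT.
  by rewrite mulf_eq0 => /orP[/eqP ->|/eqP/powR_eq0_eq0 ->]; rewrite ?mulr0 !mul0r.
have [Sa0|Sa_neq0] := eqVneq Sa 0.
  by rewrite (vanish _ _ _ Sa0) Sa0 powR0 ?invr_eq0 ?gt_eqF // mul0r.
have [Sb0|Sb_neq0] := eqVneq Sb 0.
  rewrite (eq_bigr (fun i => h i * `|b i| * `|a i|)) => [|i _]; last by rewrite mulrAC.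
  by rewrite (vanish _ _ _ Sb0) Sb0 powR0 ?invr_eq0 ?gt_eqF // mulr0.
have Sa_gt0 : 0 < Sa.
  by rewrite lt_def Sa_neq0 sumr_ge0 // => i _; rewrite mulr_ge0 ?powR_ge0.
have Sb_gt0 : 0 < Sb.
  by rewrite lt_def Sb_neq0 sumr_ge0 // => i _; rewrite mulr_ge0 ?powR_ge0.
set A := Sa `^ P^-1; set B := Sb `^ Q^-1.
have A0 : 0 < A by rewrite powR_gt0.
have B0 : 0 < B by rewrite powR_gt0.
have AP : A `^ P = Sa by rewrite powRVK // ltW.
have BQ : B `^ Q = Sb by rewrite powRVK // ltW.
clearbody A B.
apply: le_trans (_ : \sum_i A * B *
    (h i * `|a i| `^ P / (P * Sa) + h i * `|b i| `^ Q / (Q * Sb)) <= _).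
  apply: ler_sum => i _.
  (* Young's inequality for [|a i| / A] and [|b i| / B] *)
  have := conjugate_powR (divr_ge0 (normr_ge0 (a i)) (ltW A0))
    (divr_ge0 (normr_ge0 (b i)) (ltW B0)) P0 Q0 PQ.
  rewrite !powR_div // AP BQ => young.
  rewrite (_ : h i * `|a i| * `|b i| =
      A * B * (h i * ((`|a i| / A) * (`|b i| / B)))); last by field; rewrite !gt_eqF.
  apply: ler_wpM2l; first by rewrite mulr_ge0 // ltW.
  rewrite (_ : _ + _ = h i * (`|a i| `^ P / Sa / P + `|b i| `^ Q / Sb / Q)).
    by apply: ler_wpM2l.
  by field; rewrite !gt_eqF.
rewrite -mulr_sumr big_split /= -!mulr_suml -/Sa -/Sb.
rewrite (_ : Sa / (P * Sa) + Sb / (Q * Sb) = 1) ?mulr1 //.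
by rewrite -PQ; field; rewrite !gt_eqF.
Qed.

End WeightedNorms.

Section PLaplacian.
Variables (R : realType) (I : finType) (h : I -> R) (K : I -> I -> R) (p : R).
Hypotheses (h_ge0 : forall i, 0 <= h i) (K_ge0 : forall i j, 0 <= K i j).
Hypotheses (K_sym : forall i j, K i j = K j i) (p_gt1 : 1 < p).

Lemma plap_accretive q u : 1 < q -> 0 <= \sum_i h i * Psi q (u i) * plap h p K u i.
Proof.
move=> q1; pose G i j := h i * h j * K i j * Psi q (u i) * Psi p (u j - u i).
have -> : \sum_i h i * Psi q (u i) * plap h p K u i = - \sum_i \sum_j G i j.
  rewrite -sumrN; apply: eq_bigr => i _; rewrite /plap mulrN mulr_sumr.
  by congr (- _); apply: eq_bigr => j _; rewrite /G; ring.
rewrite oppr_ge0; suff : \sum_i \sum_j G i j + \sum_i \sum_j G i j <= 0 by lra.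
rewrite {2}exchange_big -big_split /= sumr_le0 // => i _.
rewrite -big_split /= sumr_le0 // => j _.
rewrite /G (K_sym j i) -[u i - u j]opprB PsiN.
rewrite (_ : _ + _ = h i * h j * K i j *
  ((Psi q (u i) - Psi q (u j)) * Psi p (u j - u i))); last by ring.
by rewrite mulr_ge0_le0 ?Psi_cross // !mulr_ge0.
Qed.

Lemma implicit_step_Lnorm_le q (u u0 f : I -> R) (tau : R) : 1 < q -> 0 <= tau ->
  (forall i, u i = u0 i + tau * (- plap h p K u i + f i)) ->
  Lnorm_n h q u <= Lnorm_n h q u0 + tau * Lnorm_n h q f.
Proof.
move=> q1 tau0 u_eq; have q0 : 0 < q by lra.
have q1_gt0 : 0 < q - 1 by rewrite subr_gt0.
pose P := q / (q - 1).
have P0 : 0 < P by rewrite divr_gt0.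
have PQ : P^-1 + q^-1 = 1.
  by rewrite /P invf_div -[X in _ + X]mul1r -mulrDl subrK divff // gt_eqF.
pose E := \sum_i h i * `|u i| `^ q.
have E0 : 0 <= E by rewrite sumr_ge0 // => i _; rewrite mulr_ge0 ?powR_ge0.
have LE : Lnorm_n h q u = E `^ q^-1 by [].
have LP : Lnorm_n h P (fun i => Psi q (u i)) = E `^ P^-1.
  congr (_ `^ _); apply: eq_bigr => i _; rewrite normr_Psi // -powRrM.
  by rewrite /P mulrCA divff ?mulr1 // gt_eqF.
have dual v : \sum_i h i * Psi q (u i) * v i <= E `^ P^-1 * Lnorm_n h q v.
  rewrite -LP; apply: le_trans _ (hoelder_Lnorm_n h_ge0 _ v P0 q0 PQ).
  apply: ler_sum => i _; move: (Psi q (u i)) (v i) => a b.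
  by rewrite -!mulrA -normrM; apply/ler_wpM2l/ler_norm.
have E_eq : E = \sum_i h i * Psi q (u i) * u0 i
    - tau * \sum_i h i * Psi q (u i) * plap h p K u i
    + tau * \sum_i h i * Psi q (u i) * f i.
  rewrite !mulr_sumr -sumrB -big_split; apply: eq_bigr => i _ /=.
  rewrite -(Psi_mul_id _ q1); have := u_eq i.
  by move: (u i) (Psi q (u i)) (plap h p K u i) => x a b ->; ring.
clearbody E.
have key : E <= E `^ P^-1 * (Lnorm_n h q u0 + tau * Lnorm_n h q f).
  rewrite {1}E_eq mulrDr mulrCA; apply: lerD; last by rewrite ler_wpM2l ?dual.
  by rewrite lerBlDr (le_trans (dual u0)) // lerDl mulr_ge0 ?plap_accretive.
rewrite LE; have [->|E_neq0] := eqVneq E 0.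
  by rewrite powR0 ?invr_eq0 ?gt_eqF // addr_ge0 ?mulr_ge0 ?Lnorm_n_ge0.
have EP_gt0 : 0 < E `^ P^-1 by rewrite powR_gt0 // lt_def E_neq0.
rewrite -(ler_pM2l EP_gt0) (le_trans _ key) // -powRD ?E_neq0 ?implybT //.
by rewrite PQ powRr1.
Qed.

Lemma kernel_sum_sym (F : I -> R) :
  \sum_i h i * \sum_j h j * K i j * F j = \sum_i h i * \sum_j h j * K i j * F i.
Proof.
under eq_bigr do rewrite mulr_sumr; rewrite exchange_big /=.
apply: eq_bigr => i _; rewrite mulr_sumr; apply: eq_bigr => j _.
by rewrite (K_sym i j); ring.
Qed.

Lemma kernel_sum_le (F : I -> R) BK : (forall i, 0 <= F i) ->
  (forall i, \sum_j h j * K i j <= BK) ->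
  \sum_i h i * \sum_j h j * K i j * F i <= BK * \sum_i h i * F i.
Proof.
move=> F0 kB; rewrite mulr_sumr; apply: ler_sum => i _.
by rewrite -mulr_suml mulrCA ler_wpM2r ?mulr_ge0.
Qed.

Lemma plap_sqr_le u BK i : (forall i, \sum_j h j * K i j <= BK) ->
  plap h p K u i ^+ 2 <=
  BK * \sum_j h j * K i j * (1 + 2 `^ qexp p * (`|u j| `^ qexp p + `|u i| `^ qexp p)).
Proof.
move=> kB; have w0 j : 0 <= h j * K i j by rewrite mulr_ge0.
pose a j := `|u j - u i| `^ (p - 1).
have plap_le : `|plap h p K u i| <= \sum_j h j * K i j * a j.
  rewrite /plap normrN (le_trans (ler_norm_sum _ _ _)) // ler_sum // => j _.
  by rewrite normrM ger0_norm // normr_Psi.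
have a_sqr_le j :
    a j ^+ 2 <= 1 + 2 `^ qexp p * (`|u j| `^ qexp p + `|u i| `^ qexp p).
  apply: le_trans (sqr_powRB1_le_qexp p_gt1 (normr_ge0 _)) _.
  by rewrite lerD2l powR_normB_le // ltW // (lt_trans ltr01 (qexp_gt1 p_gt1)).
have sum_le : \sum_j h j * K i j * a j ^+ 2 <=
    \sum_j h j * K i j * (1 + 2 `^ qexp p * (`|u j| `^ qexp p + `|u i| `^ qexp p)).
  by apply: ler_sum => j _; rewrite ler_wpM2l.
rewrite -real_normK ?num_real //.
apply: le_trans (_ : (\sum_j h j * K i j * a j) ^+ 2 <= _).
  rewrite lerXn2r ?nnegrE ?normr_ge0 // sumr_ge0 // => j _.
  by rewrite mulr_ge0 ?powR_ge0.
apply: le_trans (cauchy_schwarz_weighted _ w0) _.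
apply: le_trans (ler_wpM2l (sumr_ge0 _ (fun j _ => w0 j)) sum_le) _.
rewrite ler_wpM2r // (le_trans _ sum_le) // sumr_ge0 // => j _.
by rewrite mulr_ge0 ?sqr_ge0.
Qed.

Lemma plap_L2_le u BK : \sum_i h i = 1 -> 0 <= BK ->
  (forall i, \sum_j h j * K i j <= BK) ->
  \sum_i h i * plap h p K u i ^+ 2 <=
  BK * (BK + 2 * 2 `^ qexp p * BK * \sum_i h i * `|u i| `^ qexp p).
Proof.
move=> h1 BK0 kB; set q := qexp p; set c := 2 `^ q; pose x i := `|u i| `^ q.
have x0 i : 0 <= x i by exact: powR_ge0.
have c0 : 0 <= c by exact: powR_ge0.
pose A i := \sum_j h j * K i j * 1.
pose B i := \sum_j h j * K i j * x j.
pose C i := \sum_j h j * K i j * x i.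
have sumE i : \sum_j h j * K i j * (1 + c * (x j + x i)) = A i + c * (B i + C i).
  rewrite /A /B /C -big_split /= mulr_sumr -big_split.
  by apply: eq_bigr => j _ /=; ring.
apply: le_trans (_ : \sum_i h i * (BK * (A i + c * (B i + C i))) <= _).
  by rewrite ler_sum // => i _; rewrite -sumE ler_wpM2l // plap_sqr_le.
rewrite (_ : \sum_i _ = BK * (\sum_i h i * A i
    + c * (\sum_i h i * B i + \sum_i h i * C i))); last first.
  by rewrite !mulrDr !mulr_sumr -!big_split; apply: eq_bigr => i _ /=; ring.
have A_le : \sum_i h i * A i <= BK.
  have := kernel_sum_le (F := fun=> 1) (fun=> ler01) kB.
  by rewrite (eq_bigr h (fun i _ => mulr1 (h i))) h1 mulr1.
have C_le : \sum_i h i * C i <= BK * \sum_i h i * `|u i| `^ q.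
  exact: kernel_sum_le.
rewrite /B (kernel_sum_sym x) -/C ler_wpM2l //.
by have := ler_wpM2l c0 C_le; lra.
Qed.

End PLaplacian.

Lemma Lnorm_n_sub_le_Var2 (R : realType) (I : finType) (h : I -> R) T
    (F : R -> I -> R) a b : 0 <= a -> a < b -> b <= T ->
  ((Lnorm_n h 2 (fun i => F b i - F a i))%:E <= Var2 h T F)%E.
Proof.
move=> a0 ab bT; apply: ereal_sup_ubound.
exists 1%N, (fun i => if i == 0%N then a else b).
by split => //; [case | rewrite big_nat1].
Qed.

Lemma sum_sqr_le_BVnorm (R : realType) (I : finType) (h : I -> R) T
    (F : R -> I -> R) B b : (forall i, 0 <= h i) -> 0 < b -> b <= T ->
  (BVnorm h T F <= B%:E)%E -> \sum_i h i * F b i ^+ 2 <= 2 * B ^+ 2.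
Proof.
move=> h_ge0 b0 bT FB.
set L0 := Lnorm_n h 2 (F 0); set L1 := Lnorm_n h 2 (fun i => F b i - F 0 i).
have L0_ge0 : 0 <= L0 by exact: Lnorm_n_ge0.
have L1_ge0 : 0 <= L1 by exact: Lnorm_n_ge0.
have L01 : L0 + L1 <= B.
  rewrite -lee_fin EFinD (le_trans _ FB) // leeD2l //.
  exact: Lnorm_n_sub_le_Var2.
rewrite (eq_bigr (fun i => h i * (F 0 i + (F b i - F 0 i)) ^+ 2)); last first.
  by move=> i _; rewrite addrC subrK.
apply: le_trans (sum_sqrD_le h_ge0 _ _) _.
rewrite -!Lnorm_n2_sqr // -/L0 -/L1 ler_pM2l //.
by have := ler_pM (addr_ge0 L0_ge0 L1_ge0) (addr_ge0 L0_ge0 L1_ge0) L01 L01; nra.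
Qed.

(* [2 (P + 2 Bf^2)], where [P] bounds [||Delta_p^K u^k||_2^2] through
   [||u^k||_q <= |Bg| + |Bf|] (see [plap_L2_le]). *)
Definition scheme_const (R : realType) (p BK Bg Bf : R) : R :=
  2 * (`|BK| * (`|BK| + 2 * 2 `^ qexp p * `|BK| * (`|Bg| + `|Bf|) `^ qexp p)
       + 2 * Bf ^+ 2).

Section ImplicitScheme.
Variables (R : realType) (p BK Bg Bf : R) (I : finType) (h : I -> R).
Variables (K : I -> I -> R) (g : I -> R) (N : nat) (t : nat -> R).
Variables (f u : nat -> I -> R).
Hypotheses (p_gt1 : 1 < p) (h_gt0 : forall i, 0 < h i) (h_sum1 : \sum_i h i = 1).
Hypotheses (K_ge0 : forall i j, 0 <= K i j) (K_sym : forall i j, K i j = K j i).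
Hypotheses (K_bound : Linf1_n h K <= BK) (g_bound : Lnorm_n h (qexp p) g <= Bg).
Hypotheses (N_gt0 : (0 < N)%N) (t0 : t 0%N = 0).
Hypothesis t_incr : forall k, (k < N)%N -> t k < t k.+1.
Hypothesis f_int_bound : (\int[@lebesgue_measure R]_(s in `[0%R, t N]%classic)
  (Lnorm_n h (qexp p) (tbar f t N s))%:E <= Bf%:E)%E.
Hypothesis f_BV_bound : (BVnorm h (t N) (tbar f t N) <= Bf%:E)%E.
Hypothesis u0 : u 0%N = g.
Hypothesis scheme : forall k, (1 <= k <= N)%N -> forall i,
  (u k i - u k.-1 i) / (t k - t k.-1) = - plap h p K (u k) i + f k i.

Let h_ge0 i : 0 <= h i := ltW (h_gt0 i).

Lemma scheme_f_L2_le k : (1 <= k <= N)%N -> \sum_i h i * f k i ^+ 2 <= 2 * Bf ^+ 2.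
Proof.
move=> kN; have -> : f k = tbar f t N (t k) by rewrite /tbar kidx_t.
case/andP: kN => k1 kN.
apply: (sum_sqr_le_BVnorm h_ge0 _ (grid_le t_incr kN (leqnn N)) f_BV_bound).
by rewrite -t0 (grid_lt t_incr).
Qed.

Lemma scheme_f_Lq_sum_le :
  \sum_(0 <= k < N) Lnorm_n h (qexp p) (f k.+1) * (t k.+1 - t k) <= Bf.
Proof.
rewrite big_mkord -lee_fin -(integral_kidx t_incr N_gt0
  (b := fun k => Lnorm_n h (qexp p) (f k))); first by rewrite t0.
by move=> k; exact: Lnorm_n_ge0.
Qed.

Lemma scheme_Lnorm_step k : (k < N)%N ->
  Lnorm_n h (qexp p) (u k.+1) <=
  Lnorm_n h (qexp p) (u k) + (t k.+1 - t k) * Lnorm_n h (qexp p) (f k.+1).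
Proof.
move=> kN; have tau_gt0 : 0 < t k.+1 - t k by rewrite subr_gt0 t_incr.
apply: (implicit_step_Lnorm_le h_ge0 K_ge0 K_sym p_gt1 (qexp_gt1 p_gt1) (ltW tau_gt0)).
by move=> i; rewrite -(@scheme k.+1 kN) mulrCA divff ?gt_eqF // mulr1 addrC subrK.
Qed.

Lemma scheme_Lnorm_le k : (k <= N)%N -> Lnorm_n h (qexp p) (u k) <= `|Bg| + `|Bf|.
Proof.
move=> kN; apply: le_trans (_ : Lnorm_n h (qexp p) g +
    \sum_(0 <= j < k) Lnorm_n h (qexp p) (f j.+1) * (t j.+1 - t j) <= _).
  elim: k kN => [|k IH] kN; first by rewrite big_geq // u0 addr0.
  rewrite big_nat_recr //= addrA (le_trans (scheme_Lnorm_step kN)) // mulrC lerD2r.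
  exact: IH (ltnW kN).
apply: lerD; first exact: le_trans g_bound (ler_norm _).
apply: le_trans (le_trans scheme_f_Lq_sum_le (ler_norm _)).
rewrite (big_cat_nat (leq0n k) kN) /= lerDl big_nat_cond sumr_ge0 // => j.
by case/andP=> /andP[_ jN] _; rewrite mulr_ge0 ?Lnorm_n_ge0 // subr_ge0 ltW ?t_incr.
Qed.

Lemma scheme_plap_L2_le k : (k <= N)%N ->
  \sum_i h i * plap h p K (u k) i ^+ 2 <=
  `|BK| * (`|BK| + 2 * 2 `^ qexp p * `|BK| * (`|Bg| + `|Bf|) `^ qexp p).
Proof.
move=> kN; have kB i : \sum_j h j * K i j <= `|BK|.
  apply: le_trans (le_trans K_bound (ler_norm BK)).
  rewrite (eq_bigr (fun j => h j * `|K i j|)) => [|j _]; last by rewrite ger0_norm.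
  exact: (le_bigmax 0 (fun i => \sum_j h j * `|K i j|) i).
apply: le_trans (plap_L2_le h_ge0 K_ge0 K_sym p_gt1 _ h_sum1 (normr_ge0 _) kB) _.
have q_gt0 : 0 < qexp p := lt_trans ltr01 (qexp_gt1 p_gt1).
rewrite ler_wpM2l // lerD2l ler_wpM2l ?mulr_ge0 ?powR_ge0 // -Lnorm_n_powR //.
apply: ge0_ler_powR; rewrite ?nnegrE ?Lnorm_n_ge0 ?addr_ge0 //; first exact: ltW.
exact: scheme_Lnorm_le.
Qed.

Lemma scheme_ttilde_sub_tbar_le s : 0 <= s <= t N ->
  Lnorm_n h 2 (fun i => ttilde u t N s i - tbar u t N s i) <=
  Num.sqrt (scheme_const p BK Bg Bf) * taumax t N.
Proof.
rewrite -t0 => /(cell_kidx t_incr N_gt0) [kN /cellP[/andP[sk1 sk] _]].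
set k := kidx t N s in kN sk1 sk *.
have tau_gt0 : 0 < t k - t k.-1.
  by case/andP: kN => k1 kN; rewrite subr_gt0 (grid_lt t_incr) // prednK.
have tks : 0 <= t k - s <= taumax t N.
  by rewrite subr_ge0 sk (le_trans _ (step_le_taumax t kN)) // lerD2l lerN2.
have diffE i : ttilde u t N s i - tbar u t N s i =
    (t k - s) * (plap h p K (u k) i - f k i).
  rewrite (ttilde_sub_tbarE _ _ erefl); last by rewrite lt_eqF // -subr_gt0.
  by rewrite (@scheme k kN); ring.
have sum_le :
    \sum_i h i * (plap h p K (u k) i - f k i) ^+ 2 <= scheme_const p BK Bg Bf.
  apply: le_trans (sum_sqrD_le h_ge0 _ _) _.
  rewrite /scheme_const ler_pM2l //; apply: lerD.
    by apply: scheme_plap_L2_le; case/andP: kN.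
  by under eq_bigr do rewrite sqrrN; exact: scheme_f_L2_le.
rewrite (Lnorm_n2E h_ge0) (eq_bigr (fun i =>
    (t k - s) ^+ 2 * (h i * (plap h p K (u k) i - f k i) ^+ 2))).
  rewrite -mulr_sumr sqrtrM ?sqr_ge0 // sqrtr_sqr mulrC.
  by case/andP: tks => tks0 tks1; rewrite ler_pM ?sqrtr_ge0 ?ler_wsqrtr ?ger0_norm.
by move=> i _; rewrite diffE; ring.
Qed.

End ImplicitScheme.

Theorem lemma6p14 (R : realType) (p : R) (hp : 1 < p) (BK Bg Bf : R) :
  exists C : R, 0 < C /\
  forall (I : finType) (h : I -> R) (K : I -> I -> R) (g : I -> R)
         (T : R) (N : nat) (t : nat -> R) (f u : nat -> I -> R),
    (forall i, 0 < h i) -> \sum_i h i = 1 ->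
    (forall i j, 0 <= K i j) -> (forall i j, K i j = K j i) ->
    Linf1_n h K <= BK ->
    Lnorm_n h (qexp p) g <= Bg ->
    (0 < N)%N -> t 0%N = 0 -> t N = T ->
    (forall k, (k < N)%N -> t k < t k.+1) ->
    (\int[@lebesgue_measure R]_(s in `[0%R, T]%classic)
        (Lnorm_n h (qexp p) (tbar f t N s))%:E <= Bf%:E)%E ->
    (BVnorm h T (tbar f t N) <= Bf%:E)%E ->
    u 0%N = g ->
    (forall k, (1 <= k <= N)%N -> forall i,
        (u k i - u k.-1 i) / (t k - t k.-1) = - plap h p K (u k) i + f k i) ->
    forall s, 0 <= s <= T ->
      Lnorm_n h 2 (fun i => ttilde u t N s i - tbar u t N s i) <= C * taumax t N.
Proof.
exists (Num.sqrt (scheme_const p BK Bg Bf) + 1).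
split; first by rewrite ltr_pwDr ?sqrtr_ge0.
move=> I h K g T N t f u h_gt0 h_sum1 K_ge0 K_sym K_bound g_bound N_gt0 t0 tN.
move=> t_incr f_int_bound f_BV_bound u0 scheme s sT; subst T.
apply: le_trans (scheme_ttilde_sub_tbar_le hp h_gt0 h_sum1 K_ge0 K_sym K_bound
  g_bound N_gt0 t0 t_incr f_int_bound f_BV_bound u0 scheme sT) _.
by rewrite ler_wpM2r ?lerDl ?bigmax_ge_id.
Qed.
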